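(* There exists a kernel $K\in C(\mathbb{R}^3;\mathbb{R}^{3\times3})$ admitting a flow $X$ of $\omega_0$ (in the sense below) such that $X(t,\Xi)\subset\{0\}\times[-1,1]\times\{0\}$ for all sufficiently large $t>0$.
   Context: Let $\Xi=\{0\}\times[-1,1]\times[-1,1]\subset\mathbb{R}^3$, $\mathcal{H}^2_\Xi$ the two-dimensional Hausdorff measure on $\Xi$, and $\omega_0=(0,1,0)\,\mathcal{H}^2_\Xi$. A kernel $K\in C(\mathbb{R}^3;\mathbb{R}^{3\times3})$ admits a flow $X\in C([0,\infty)\times\Xi;\mathbb{R}^3)$ of $\omega_0$ if $X$ is differentiable with respect to $t$ and to $\alpha_2$, the velocity $u(t,x)=\int_\Xi K(x-X(t,\alpha))\,\partial_{\alpha_2}X(t,\alpha)\,d\mathcal{H}^2_\Xi(\alpha)$ exists for all $t\ge0$ and $x\in X(t,\Xi)$, and $\partial_tX(t,a)=u(t,X(t,a))$, $X(0,a)=a$ for all $(t,a)\in[0,\infty)\times\Xi$. *)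

From Stdlib Require Import Reals.
Open Scope R_scope.

Inductive idx3 : Type := I0 | I1 | I2.
Definition vec3 := idx3 -> R.
Definition mat3 := idx3 -> idx3 -> R.

Definition mk3 (a b c : R) : vec3 :=
  fun i => match i with I0 => a | I1 => b | I2 => c end.
Definition vsub (x y : vec3) : vec3 := fun i => x i - y i.
Definition mulmv (M : mat3) (v : vec3) : vec3 :=
  fun i => M i I0 * v I0 + M i I1 * v I1 + M i I2 * v I2.
Definition norm3 (v : vec3) : R := sqrt (v I0 ^ 2 + v I1 ^ 2 + v I2 ^ 2).

Definition kernel_continuous (K : vec3 -> mat3) : Prop :=
  forall (x : vec3) (eps : R), eps > 0 -> exists delta, delta > 0 /\
    forall y : vec3, norm3 (vsub y x) < delta ->
      forall i j, Rabs (K y i j - K x i j) < eps.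

(** Parameter domain Xi = {0} x [-1,1] x [-1,1]; a point (0,a2,a3) of Xi is
    represented by its coordinates (a2,a3). *)
Definition inXi (a2 a3 : R) : Prop := -1 <= a2 <= 1 /\ -1 <= a3 <= 1.

Definition flow_map := R -> R -> R -> vec3.

Definition flow_continuous (X : flow_map) : Prop :=
  forall t a2 a3, 0 <= t -> inXi a2 a3 ->
  forall eps, eps > 0 -> exists delta, delta > 0 /\
    forall s b2 b3, 0 <= s -> inXi b2 b3 ->
      Rabs (s - t) < delta -> Rabs (b2 - a2) < delta -> Rabs (b3 - a3) < delta ->
      forall i, Rabs (X s b2 b3 i - X t a2 a3 i) < eps.

Definition has_deriv_within (D : R -> Prop) (g : R -> R) (x0 l : R) : Prop :=
  forall eps, eps > 0 -> exists delta, delta > 0 /\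
    forall h, D (x0 + h) -> h <> 0 -> Rabs h < delta ->
      Rabs ((g (x0 + h) - g x0) / h - l) < eps.

Fixpoint rsum (n : nat) (g : nat -> R) : R :=
  match n with O => 0 | S k => rsum k g + g k end.

Definition tagged_partition (a b : R) (n : nat) (p s : nat -> R) (delta : R) : Prop :=
  p O = a /\ p n = b /\
  forall i, (i < n)%nat ->
    p i < p (S i) /\ p (S i) - p i < delta /\ p i <= s i <= p (S i).

(** Riemann integral over the square [-1,1]^2 (w.r.t. Lebesgue measure on the
    square, i.e. H^2 on Xi), defined by grid Riemann sums. *)
Definition is_integral_Xi (f : R -> R -> R) (I : R) : Prop :=
  forall eps, eps > 0 -> exists delta, delta > 0 /\
    forall n m p s q r,
      tagged_partition (-1) 1 n p s delta ->
      tagged_partition (-1) 1 m q r delta ->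
      Rabs (rsum n (fun i => rsum m (fun j =>
              f (s i) (r j) * (p (S i) - p i) * (q (S j) - q j))) - I) < eps.

Definition is_integral_Xi_vec (f : R -> R -> vec3) (I : vec3) : Prop :=
  forall i, is_integral_Xi (fun a2 a3 => f a2 a3 i) (I i).

(** K admits a flow X of omega_0 = (0,1,0) H^2|_Xi.  dX2 is the partial
    derivative of X with respect to alpha_2. *)
Definition admits_flow (K : vec3 -> mat3) (X : flow_map) : Prop :=
  flow_continuous X /\
  (forall a2 a3, inXi a2 a3 -> X 0 a2 a3 = mk3 0 a2 a3) /\
  exists dX2 : flow_map,
    (forall t a2 a3, 0 <= t -> inXi a2 a3 -> forall i,
        has_deriv_within (fun b => -1 <= b <= 1)
          (fun b => X t b a3 i) a2 (dX2 t a2 a3 i)) /\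
    (forall t a2 a3, 0 <= t -> inXi a2 a3 ->
       exists u : vec3,
         is_integral_Xi_vec
           (fun b2 b3 => mulmv (K (vsub (X t a2 a3) (X t b2 b3))) (dX2 t b2 b3)) u /\
         forall i, has_deriv_within (fun s => 0 <= s)
                     (fun s => X s a2 a3 i) t (u i)).

(* With r(t) = max(1 - t, 0), the flow X(t,a) = ((r^2 - r^3) a3, a2, r^2 a3) starts at the
   identity and collapses Xi onto {0} x [-1,1] x {0} at t = 1.  A difference
   y = X(t,a) - X(t,b) determines r(t) = 1 - y0/y2 and r(t) (a3 - b3) = y2 / r(t), so a
   kernel can read off the time from its argument: with K(y) e2 = ((3r - 2)/4 F, 0, -F/2),
   F = r (a3 - b3), the velocity is the integral over Xi of an affine function of b3, namely
   ((3r^2 - 2r) a3, 0, -2r a3) = dX/dt.  Clamping r to [0,1] and F to [-2r, 2r] keeps K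
   continuous, because then F^2 <= 2 |y2|. *)

From Stdlib Require Import Reals Lra Psatz Lia.
Open Scope R_scope.

Lemma rsum_ext n f g :
  (forall i, (i < n)%nat -> f i = g i) -> rsum n f = rsum n g.
Proof.
  induction n as [|n IH]; intros Hfg; simpl; [reflexivity|].
  rewrite IH by (intros; apply Hfg; lia). rewrite Hfg by lia. reflexivity.
Qed.

Lemma rsum_plus n f g : rsum n (fun i => f i + g i) = rsum n f + rsum n g.
Proof. induction n as [|n IH]; simpl; [ring | rewrite IH; ring]. Qed.

Lemma rsum_minus n f g : rsum n (fun i => f i - g i) = rsum n f - rsum n g.
Proof. induction n as [|n IH]; simpl; [ring | rewrite IH; ring]. Qed.

Lemma rsum_scal n c f : rsum n (fun i => c * f i) = c * rsum n f.
Proof. induction n as [|n IH]; simpl; [ring | rewrite IH; ring]. Qed.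

Lemma rsum_telescope n g : rsum n (fun i => g (S i) - g i) = g n - g O.
Proof. induction n as [|n IH]; simpl; [ring | rewrite IH; ring]. Qed.

Lemma rsum_le n f g : (forall i, (i < n)%nat -> f i <= g i) -> rsum n f <= rsum n g.
Proof.
  induction n as [|n IH]; intros Hfg; simpl; [lra|].
  apply Rplus_le_compat; [apply IH; intros; apply Hfg; lia | apply Hfg; lia].
Qed.

Lemma Rabs_rsum_le n f : Rabs (rsum n f) <= rsum n (fun i => Rabs (f i)).
Proof.
  induction n as [|n IH]; simpl; [rewrite Rabs_R0; lra|].
  eapply Rle_trans; [apply Rabs_triang | lra].
Qed.

Section TaggedPartition.

Variables (a b delta : R) (n : nat) (p s : nat -> R).
Hypothesis Hp : tagged_partition a b n p s delta.

Lemma tagged_partition_le i j : (i <= j <= n)%nat -> p i <= p j.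
Proof.
  destruct Hp as [_ [_ Hstep]]. intros [Hij Hjn].
  induction Hij as [|j Hij IH]; [lra|].
  destruct (Hstep j ltac:(lia)) as [Hlt _]. specialize (IH ltac:(lia)). lra.
Qed.

Lemma tagged_partition_tag_range i : (i < n)%nat -> a <= s i <= b.
Proof.
  intros Hi. pose proof (tagged_partition_le O i ltac:(lia)) as Hlo.
  pose proof (tagged_partition_le (S i) n ltac:(lia)) as Hhi.
  destruct Hp as [H0 [Hn Hstep]]. destruct (Hstep i Hi) as [_ [_ Htag]]. lra.
Qed.

Lemma rsum_partition_lengths : rsum n (fun i => p (S i) - p i) = b - a.
Proof. destruct Hp as [H0 [Hn _]]. rewrite rsum_telescope, H0, Hn. reflexivity. Qed.

(* Replacing each tag by the midpoint of its cell makes the Riemann sum of the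
   identity telescope to (b^2 - a^2)/2; each tag is within delta/2 of that midpoint. *)
Lemma riemann_sum_id_error :
  Rabs (rsum n (fun i => s i * (p (S i) - p i)) - (b ^ 2 - a ^ 2) / 2)
    <= delta / 2 * (b - a).
Proof.
  assert (Hmid : rsum n (fun i => s i * (p (S i) - p i)) - (b ^ 2 - a ^ 2) / 2
            = rsum n (fun i => (s i - (p (S i) + p i) / 2) * (p (S i) - p i))).
  { destruct Hp as [H0 [Hn _]].
    replace ((b ^ 2 - a ^ 2) / 2) with (p n ^ 2 / 2 - p O ^ 2 / 2) by (rewrite H0, Hn; field).
    rewrite <- (rsum_telescope n (fun i => p i ^ 2 / 2)), <- rsum_minus.
    apply rsum_ext. intros i _. field. }
  rewrite Hmid, <- rsum_partition_lengths, <- rsum_scal.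
  eapply Rle_trans; [apply Rabs_rsum_le|]. apply rsum_le. intros i Hi.
  destruct Hp as [_ [_ Hstep]]. destruct (Hstep i Hi) as [Hlt [Hmesh Htag]].
  rewrite Rabs_mult, (Rabs_right (p (S i) - p i)) by lra.
  apply Rmult_le_compat_r; [lra|]. apply Rabs_le. lra.
Qed.

End TaggedPartition.

Lemma is_integral_Xi_affine (f : R -> R -> R) c0 c3 I :
  (forall b2 b3, inXi b2 b3 -> f b2 b3 = c0 + c3 * b3) -> I = 4 * c0 ->
  is_integral_Xi f I.
Proof.
  intros Hf -> eps Heps. pose proof (Rabs_pos c3).
  exists (eps / (2 * Rabs c3 + 1)). split; [apply Rdiv_lt_0_compat; lra|].
  intros n m p s q r Hp Hq.
  set (sr := rsum m (fun j => r j * (q (S j) - q j))).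
  assert (Hsum : rsum n (fun i => rsum m (fun j =>
                   f (s i) (r j) * (p (S i) - p i) * (q (S j) - q j)))
               = rsum n (fun i => p (S i) - p i) * (c0 * (1 - -1) + c3 * sr)).
  { rewrite Rmult_comm, <- rsum_scal. apply rsum_ext. intros i Hi.
    unfold sr. rewrite <- (rsum_partition_lengths _ _ _ _ _ _ Hq), <- !rsum_scal, <- rsum_plus,
      Rmult_comm, <- rsum_scal.
    apply rsum_ext. intros j Hj.
    rewrite Hf by (split; eapply tagged_partition_tag_range; eauto). ring. }
  pose proof (riemann_sum_id_error _ _ _ _ _ _ Hq) as HS. fold sr in HS.
  rewrite Hsum, (rsum_partition_lengths _ _ _ _ _ _ Hp).
  replace ((1 ^ 2 - (-1) ^ 2) / 2) with 0 in HS by field. rewrite Rminus_0_r in HS.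
  replace ((1 - -1) * (c0 * (1 - -1) + c3 * sr) - 4 * c0) with (2 * c3 * sr) by ring.
  rewrite !Rabs_mult, Rabs_right by lra.
  assert (Hd : eps / (2 * Rabs c3 + 1) / 2 * (1 - -1) * (2 * Rabs c3 + 1) = eps)
    by (field; lra).
  nra.
Qed.

Definition cont_at (f : vec3 -> R) (x : vec3) : Prop :=
  forall eps, eps > 0 -> exists delta, delta > 0 /\
    forall y, (forall i, Rabs (y i - x i) < delta) -> Rabs (f y - f x) < eps.

Lemma Rabs_coord_le_norm3 (v : vec3) i : Rabs (v i) <= norm3 v.
Proof.
  unfold norm3. rewrite <- sqrt_Rsqr_abs. apply sqrt_le_1_alt. unfold Rsqr.
  pose proof (pow2_ge_0 (v I0)). pose proof (pow2_ge_0 (v I1)).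
  pose proof (pow2_ge_0 (v I2)). destruct i; simpl; nra.
Qed.

Lemma common_delta (P : idx3 -> R -> Prop) :
  (forall i d d', 0 < d' <= d -> P i d -> P i d') ->
  (forall i, exists d, d > 0 /\ P i d) -> exists d, d > 0 /\ forall i, P i d.
Proof.
  intros Hmono HP.
  destruct (HP I0) as [d0 [H0 P0]], (HP I1) as [d1 [H1 P1]], (HP I2) as [d2 [H2 P2]].
  set (d := Rmin d0 (Rmin d1 d2)).
  assert (Hd0 : d <= d0) by apply Rmin_l.
  assert (Hd1 : d <= d1) by (eapply Rle_trans; [apply Rmin_r | apply Rmin_l]).
  assert (Hd2 : d <= d2) by (eapply Rle_trans; [apply Rmin_r | apply Rmin_r]).
  assert (Hpos : d > 0) by (repeat apply Rmin_pos; lra).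
  exists d. split; [exact Hpos|].
  intros []; [apply (Hmono _ d0) | apply (Hmono _ d1) | apply (Hmono _ d2)]; auto; lra.
Qed.

Lemma kernel_continuous_entrywise (K : vec3 -> mat3) :
  (forall x i j, cont_at (fun y => K y i j) x) -> kernel_continuous K.
Proof.
  intros HK x eps Heps.
  set (close d := fun y : vec3 => forall k, Rabs (y k - x k) < d).
  assert (Hclose : forall d d' y, 0 < d' <= d -> close d' y -> close d y)
    by (intros d d' y Hd Hy k; specialize (Hy k); lra).
  destruct (common_delta (fun i d => forall j y, close d y ->
              Rabs (K y i j - K x i j) < eps)) as [d [Hd H]].
  - intros i d d' Hd' Hi j y Hy. eapply Hi, Hclose; eauto.
  - intros i. apply (common_delta (fun j d => forall y, close d y ->
                      Rabs (K y i j - K x i j) < eps)).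
    + intros j d d' Hd' Hj y Hy. eapply Hj, Hclose; eauto.
    + intros j. exact (HK x i j eps Heps).
  - exists d. split; [exact Hd|]. intros y Hy i j. apply H. intros k.
    eapply Rle_lt_trans; [apply (Rabs_coord_le_norm3 (vsub y x)) | exact Hy].
Qed.

Lemma cont_at_const c x : cont_at (fun _ => c) x.
Proof.
  intros eps Heps. exists 1. split; [lra|]. intros y _.
  rewrite Rminus_diag, Rabs_R0. lra.
Qed.

Lemma cont_at_coord i x : cont_at (fun y => y i) x.
Proof. intros eps Heps. exists eps. split; [lra|]. intros y Hy. apply Hy. Qed.

Lemma cont_at_lipschitz2 (h : R -> R -> R) f g x :
  (forall u v u' v', Rabs (h u v - h u' v') <= Rabs (u - u') + Rabs (v - v')) ->
  cont_at f x -> cont_at g x -> cont_at (fun y => h (f y) (g y)) x.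
Proof.
  intros Hh Hf Hg eps Heps.
  destruct (Hf (eps / 2) ltac:(lra)) as [d1 [Hd1 H1]].
  destruct (Hg (eps / 2) ltac:(lra)) as [d2 [Hd2 H2]].
  exists (Rmin d1 d2). split; [apply Rmin_pos; lra|]. intros y Hy.
  pose proof (Rmin_l d1 d2). pose proof (Rmin_r d1 d2).
  specialize (H1 y ltac:(intros i; specialize (Hy i); lra)).
  specialize (H2 y ltac:(intros i; specialize (Hy i); lra)).
  specialize (Hh (f y) (g y) (f x) (g x)). lra.
Qed.

Lemma Rminus_lipschitz u v u' v' :
  Rabs ((u - v) - (u' - v')) <= Rabs (u - u') + Rabs (v - v').
Proof. unfold Rabs; repeat destruct Rcase_abs; lra. Qed.

Lemma Rmax_lipschitz u v u' v' :
  Rabs (Rmax u v - Rmax u' v') <= Rabs (u - u') + Rabs (v - v').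
Proof. unfold Rmax, Rabs; repeat destruct Rle_dec; repeat destruct Rcase_abs; lra. Qed.

Lemma Rmin_lipschitz u v u' v' :
  Rabs (Rmin u v - Rmin u' v') <= Rabs (u - u') + Rabs (v - v').
Proof. unfold Rmin, Rabs; repeat destruct Rle_dec; repeat destruct Rcase_abs; lra. Qed.

Lemma cont_at_minus f g x : cont_at f x -> cont_at g x -> cont_at (fun y => f y - g y) x.
Proof. apply cont_at_lipschitz2, Rminus_lipschitz. Qed.

Lemma cont_at_mult f g x : cont_at f x -> cont_at g x -> cont_at (fun y => f y * g y) x.
Proof.
  intros Hf Hg eps Heps.
  set (A := Rabs (f x) + 1). set (B := Rabs (g x) + 1).
  assert (HA : A > 0) by (unfold A; pose proof (Rabs_pos (f x)); lra).
  assert (HB : B > 0) by (unfold B; pose proof (Rabs_pos (g x)); lra).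
  destruct (Hf (Rmin 1 (eps / (2 * B)))) as [d1 [Hd1 H1]].
  { apply Rmin_pos; [lra | apply Rdiv_lt_0_compat; lra]. }
  destruct (Hg (eps / (2 * A))) as [d2 [Hd2 H2]]; [apply Rdiv_lt_0_compat; lra|].
  exists (Rmin d1 d2). split; [apply Rmin_pos; lra|]. intros y Hy.
  pose proof (Rmin_l d1 d2). pose proof (Rmin_r d1 d2).
  specialize (H1 y ltac:(intros i; specialize (Hy i); lra)).
  specialize (H2 y ltac:(intros i; specialize (Hy i); lra)).
  pose proof (Rmin_l 1 (eps / (2 * B))). pose proof (Rmin_r 1 (eps / (2 * B))).
  assert (Hfy : Rabs (f y) <= A).
  { unfold A. pose proof (Rabs_triang_inv (f y) (f x)). lra. }
  replace (f y * g y - f x * g x) with (f y * (g y - g x) + g x * (f y - f x)) by ring.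
  eapply Rle_lt_trans; [apply Rabs_triang|]. rewrite !Rabs_mult.
  assert (Rabs (f y) * Rabs (g y - g x) <= A * (eps / (2 * A))).
  { apply Rmult_le_compat; try apply Rabs_pos; lra. }
  assert (Rabs (g x) * Rabs (f y - f x) < B * (eps / (2 * B))).
  { apply Rle_lt_trans with (B * Rabs (f y - f x)).
    - apply Rmult_le_compat_r; [apply Rabs_pos | unfold B; lra].
    - apply Rmult_lt_compat_l; lra. }
  assert (A * (eps / (2 * A)) = eps / 2) by (field; lra).
  assert (B * (eps / (2 * B)) = eps / 2) by (field; lra).
  lra.
Qed.

Lemma cont_at_inv f x : cont_at f x -> f x <> 0 -> cont_at (fun y => / f y) x.
Proof.
  intros Hf Hfx eps Heps.
  set (a := Rabs (f x)). assert (Ha : a > 0) by (apply Rabs_pos_lt; exact Hfx).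
  destruct (Hf (Rmin (a / 2) (eps * a * a / 2))) as [d [Hd H]].
  { apply Rmin_pos; [lra|]. apply Rdiv_lt_0_compat; [|lra].
    apply Rmult_lt_0_compat; [apply Rmult_lt_0_compat|]; lra. }
  exists d. split; [exact Hd|]. intros y Hy. specialize (H y Hy).
  pose proof (Rmin_l (a / 2) (eps * a * a / 2)). pose proof (Rmin_r (a / 2) (eps * a * a / 2)).
  assert (Hfy : Rabs (f y) >= a / 2).
  { pose proof (Rabs_triang_inv (f x) (f y)). rewrite Rabs_minus_sym in H. unfold a in *. lra. }
  assert (f y <> 0) by (intros E; rewrite E, Rabs_R0 in Hfy; lra).
  replace (/ f y - / f x) with ((f x - f y) / (f y * f x)) by (field; auto).
  unfold Rdiv. rewrite Rabs_mult, Rabs_inv, Rabs_mult, Rabs_minus_sym. fold a.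
  apply (Rmult_lt_reg_r (Rabs (f y) * a)); [apply Rmult_lt_0_compat; lra|].
  rewrite Rmult_assoc, Rinv_l, Rmult_1_r by (apply Rgt_not_eq, Rmult_lt_0_compat; lra).
  assert (a * a / 2 <= Rabs (f y) * a) by nra.
  nra.
Qed.

Lemma cont_at_dominated f g C x :
  cont_at g x -> (forall y, Rabs (f y - f x) <= C * Rabs (g y - g x)) -> cont_at f x.
Proof.
  intros Hg Hfg eps Heps. pose proof (Rabs_pos C) as HC.
  destruct (Hg (eps / (Rabs C + 1))) as [d [Hd Hgy]]; [apply Rdiv_lt_0_compat; lra|].
  exists d. split; [exact Hd|]. intros y Hy. specialize (Hgy y Hy).
  pose proof (Rabs_pos (g y - g x)). pose proof (Rle_abs C).
  assert (Hc : (Rabs C + 1) * (eps / (Rabs C + 1)) = eps) by (field; lra).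
  specialize (Hfg y). nra.
Qed.

Lemma cont_at_opp f x : cont_at f x -> cont_at (fun y => - f y) x.
Proof.
  intros Hf. apply (cont_at_dominated _ f 1); [exact Hf|]. intros y.
  replace (- f y - - f x) with (- (f y - f x)) by ring. rewrite Rabs_Ropp. lra.
Qed.

Definition clamp (lo hi v : R) : R := Rmax lo (Rmin v hi).

Lemma clamp_range lo hi v : lo <= hi -> lo <= clamp lo hi v <= hi.
Proof. intros. unfold clamp, Rmax, Rmin. repeat destruct Rle_dec; lra. Qed.

Lemma clamp_id lo hi v : lo <= v <= hi -> clamp lo hi v = v.
Proof. intros. unfold clamp, Rmax, Rmin. repeat destruct Rle_dec; lra. Qed.

Lemma Rabs_clamp_sym_le hi v : 0 <= hi -> Rabs (clamp (- hi) hi v) <= Rabs v.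
Proof.
  intros. unfold clamp, Rmax, Rmin, Rabs.
  repeat destruct Rle_dec; repeat destruct Rcase_abs; lra.
Qed.

Lemma cont_at_clamp lo hi v x :
  cont_at lo x -> cont_at hi x -> cont_at v x -> cont_at (fun y => clamp (lo y) (hi y) (v y)) x.
Proof.
  intros Hlo Hhi Hv. unfold clamp.
  apply (cont_at_lipschitz2 Rmax); [apply Rmax_lipschitz | exact Hlo|].
  apply (cont_at_lipschitz2 Rmin); [apply Rmin_lipschitz | exact Hv | exact Hhi].
Qed.

Definition ramp_of (y : vec3) : R := clamp 0 1 (1 - y I0 / y I2).

Definition ramp_gap_of (y : vec3) : R :=
  clamp (- (2 * ramp_of y)) (2 * ramp_of y) (y I2 / ramp_of y).

Definition kernel_col (y : vec3) : vec3 :=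
  mk3 ((3 * ramp_of y - 2) / 4 * ramp_gap_of y) 0 (- ramp_gap_of y / 2).

Definition collapse_kernel (y : vec3) : mat3 :=
  fun i j => match j with I1 => kernel_col y i | _ => 0 end.

Lemma ramp_of_range y : 0 <= ramp_of y <= 1.
Proof. apply clamp_range. lra. Qed.

(* |F| <= 2 r and |F| <= |y2| / r give F^2 <= 2 |y2|: this is what makes the kernel
   continuous across the plane y2 = 0, where [ramp_of] jumps. *)
Lemma ramp_gap_of_sq_le y : ramp_gap_of y ^ 2 <= 2 * Rabs (y I2).
Proof.
  pose proof (ramp_of_range y) as Hr. unfold ramp_gap_of. set (r := ramp_of y) in *.
  destruct (Req_dec r 0) as [Hr0 | Hr0].
  - rewrite Hr0, Rmult_0_r, Ropp_0. unfold Rdiv. rewrite Rinv_0, Rmult_0_r, clamp_id by lra.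
    pose proof (Rabs_pos (y I2)). lra.
  - set (F := clamp (- (2 * r)) (2 * r) (y I2 / r)).
    pose proof (clamp_range (- (2 * r)) (2 * r) (y I2 / r) ltac:(lra)) as HF.
    pose proof (Rabs_clamp_sym_le (2 * r) (y I2 / r) ltac:(lra)) as HFabs. fold F in HF, HFabs.
    unfold Rdiv in HFabs. rewrite Rabs_mult, Rabs_inv, (Rabs_right r) in HFabs by lra.
    assert (HFr : Rabs F * r <= Rabs (y I2)).
    { apply (Rmult_le_compat_r r) in HFabs; [|lra].
      rewrite Rmult_assoc, Rinv_l, Rmult_1_r in HFabs by lra. exact HFabs. }
    assert (HF2 : Rabs F <= 2 * r) by (apply Rabs_le; lra).
    rewrite <- (pow2_abs F). pose proof (Rabs_pos F). nra.
Qed.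

Lemma ramp_gap_of_zero y : y I2 = 0 -> ramp_gap_of y = 0.
Proof.
  intros Hy. pose proof (ramp_gap_of_sq_le y) as H. rewrite Hy, Rabs_R0 in H.
  destruct (Req_dec (ramp_gap_of y) 0) as [| HF]; [assumption|].
  pose proof (pow_nonzero _ 2 HF). pose proof (pow2_ge_0 (ramp_gap_of y)). lra.
Qed.

Lemma cont_at_ramp_of x : x I2 <> 0 -> cont_at ramp_of x.
Proof.
  intros Hx. apply cont_at_clamp; [apply cont_at_const | apply cont_at_const|].
  apply cont_at_minus; [apply cont_at_const|].
  apply cont_at_mult; [apply cont_at_coord|].
  apply cont_at_inv; [apply cont_at_coord | exact Hx].
Qed.

Lemma cont_at_ramp_gap_of x : cont_at ramp_gap_of x.
Proof.
  destruct (Req_dec (x I2) 0) as [Hx | Hx].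
  - intros eps Heps. exists (eps * eps / 2). split; [nra|]. intros y Hy.
    rewrite (ramp_gap_of_zero x Hx), Rminus_0_r.
    specialize (Hy I2). rewrite Hx, Rminus_0_r in Hy.
    pose proof (ramp_gap_of_sq_le y). rewrite <- (pow2_abs (ramp_gap_of y)) in *.
    pose proof (Rabs_pos (ramp_gap_of y)). nra.
  - pose proof (cont_at_ramp_of x Hx) as Hr.
    destruct (Req_dec (ramp_of x) 0) as [Hr0 | Hr0].
    + apply (cont_at_dominated _ ramp_of 2); [exact Hr|]. intros y.
      pose proof (ramp_of_range y).
      pose proof (clamp_range (- (2 * ramp_of y)) (2 * ramp_of y) (y I2 / ramp_of y) ltac:(lra)).
      pose proof (clamp_range (- (2 * ramp_of x)) (2 * ramp_of x) (x I2 / ramp_of x) ltac:(lra)).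
      unfold ramp_gap_of in *. rewrite Hr0 in *. rewrite Rminus_0_r.
      apply Rabs_le. rewrite Rabs_right by lra. lra.
    + apply cont_at_clamp.
      * apply cont_at_opp, cont_at_mult; [apply cont_at_const | exact Hr].
      * apply cont_at_mult; [apply cont_at_const | exact Hr].
      * apply cont_at_mult; [apply cont_at_coord | apply cont_at_inv; assumption].
Qed.

Lemma cont_at_kernel_col x i : cont_at (fun y => kernel_col y i) x.
Proof.
  pose proof (cont_at_ramp_gap_of x) as HF.
  destruct i; unfold kernel_col, mk3.
  - destruct (Req_dec (ramp_gap_of x) 0) as [HF0 | HF0].
    + apply (cont_at_dominated _ ramp_gap_of 1); [exact HF|]. intros y.
      rewrite HF0, Rmult_0_r, !Rminus_0_r, Rabs_mult.
      pose proof (ramp_of_range y). pose proof (Rabs_pos (ramp_gap_of y)).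
      assert (Rabs ((3 * ramp_of y - 2) / 4) <= 1) by (apply Rabs_le; lra). nra.
    + assert (Hx : x I2 <> 0) by (intros E; apply HF0, ramp_gap_of_zero, E).
      apply cont_at_mult; [|exact HF].
      apply (cont_at_mult (fun y => 3 * ramp_of y - 2) (fun _ => / 4)); [|apply cont_at_const].
      apply cont_at_minus; [|apply cont_at_const].
      apply cont_at_mult; [apply cont_at_const | apply cont_at_ramp_of, Hx].
  - apply cont_at_const.
  - apply (cont_at_mult (fun y => - ramp_gap_of y) (fun _ => / 2)); [|apply cont_at_const].
    apply cont_at_opp, HF.
Qed.

Lemma collapse_kernel_continuous : kernel_continuous collapse_kernel.
Proof.
  apply kernel_continuous_entrywise. intros x i j.
  destruct j; unfold collapse_kernel;
    [apply cont_at_const | apply cont_at_kernel_col | apply cont_at_const].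
Qed.

Section FlowDifference.

Variables (y : vec3) (r d : R).
Hypotheses (Hr : 0 <= r <= 1) (Hd : -2 <= d <= 2)
  (Hy0 : y I0 = (r ^ 2 - r ^ 3) * d) (Hy2 : y I2 = r ^ 2 * d).

Lemma ramp_of_flow_diff : r * d <> 0 -> ramp_of y = r.
Proof.
  intros Hrd. assert (r <> 0) by (intros E; apply Hrd; rewrite E; ring).
  assert (d <> 0) by (intros E; apply Hrd; rewrite E; ring).
  unfold ramp_of. rewrite Hy0, Hy2.
  replace (1 - (r ^ 2 - r ^ 3) * d / (r ^ 2 * d)) with r by (field; auto).
  apply clamp_id. exact Hr.
Qed.

Lemma ramp_gap_of_flow_diff : ramp_gap_of y = r * d.
Proof.
  destruct (Req_dec (r * d) 0) as [Hrd | Hrd].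
  - rewrite Hrd. apply ramp_gap_of_zero. rewrite Hy2.
    replace (r ^ 2 * d) with (r * (r * d)) by ring. rewrite Hrd. ring.
  - assert (r <> 0) by (intros E; apply Hrd; rewrite E; ring).
    unfold ramp_gap_of. rewrite (ramp_of_flow_diff Hrd), Hy2.
    replace (r ^ 2 * d / r) with (r * d) by (field; auto).
    apply clamp_id. nra.
Qed.

Lemma kernel_col_flow_diff :
  kernel_col y I0 = (3 * r - 2) / 4 * (r * d) /\ kernel_col y I2 = - (r * d) / 2.
Proof.
  unfold kernel_col, mk3. rewrite ramp_gap_of_flow_diff. split; [|reflexivity].
  destruct (Req_dec (r * d) 0) as [Hrd | Hrd].
  - rewrite Hrd. ring.
  - rewrite (ramp_of_flow_diff Hrd). reflexivity.
Qed.

End FlowDifference.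

Lemma has_deriv_within_const (D : R -> Prop) c t : has_deriv_within D (fun _ => c) t 0.
Proof.
  intros eps Heps. exists 1. split; [lra|]. intros h _ Hh _.
  replace ((c - c) / h - 0) with 0 by (field; exact Hh). rewrite Rabs_R0. lra.
Qed.

Lemma has_deriv_within_id (D : R -> Prop) t : has_deriv_within D (fun s => s) t 1.
Proof.
  intros eps Heps. exists 1. split; [lra|]. intros h _ Hh _.
  replace ((t + h - t) / h - 1) with 0 by (field; exact Hh). rewrite Rabs_R0. lra.
Qed.

Lemma has_deriv_within_taylor (D : R -> Prop) g t l C :
  (forall h, D (t + h) -> Rabs (g (t + h) - g t - l * h) <= C * h ^ 2) ->
  has_deriv_within D g t l.
Proof.
  intros Hg eps Heps. pose proof (Rabs_pos C) as HC0.
  exists (eps / (Rabs C + 1)). split; [apply Rdiv_lt_0_compat; lra|].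
  intros h HD Hh Hsmall. specialize (Hg h HD).
  pose proof (Rabs_pos_lt h Hh) as Hpos.
  replace ((g (t + h) - g t) / h - l) with ((g (t + h) - g t - l * h) / h) by (field; exact Hh).
  unfold Rdiv. rewrite Rabs_mult, Rabs_inv.
  apply (Rmult_lt_reg_r (Rabs h)); [exact Hpos|].
  rewrite Rmult_assoc, Rinv_l, Rmult_1_r by lra.
  rewrite <- (pow2_abs h) in Hg. pose proof (Rle_abs C).
  assert (Hhe : Rabs h * (Rabs C + 1) < eps).
  { apply (Rmult_lt_compat_r (Rabs C + 1)) in Hsmall; [|lra].
    unfold Rdiv in Hsmall. rewrite Rmult_assoc, Rinv_l, Rmult_1_r in Hsmall by lra. exact Hsmall. }
  nra.
Qed.

Definition ramp (t : R) : R := Rmax (1 - t) 0.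

Lemma ramp_range t : 0 <= t -> 0 <= ramp t <= 1.
Proof. intros. unfold ramp, Rmax. destruct Rle_dec; lra. Qed.

Lemma ramp_lipschitz s t : Rabs (ramp s - ramp t) <= Rabs (s - t).
Proof. unfold ramp, Rmax, Rabs. repeat destruct Rle_dec; repeat destruct Rcase_abs; lra. Qed.

Lemma ramp_0 : ramp 0 = 1.
Proof. unfold ramp, Rmax. destruct Rle_dec; lra. Qed.

Lemma ramp_eq0 t : 1 <= t -> ramp t = 0.
Proof. intros. unfold ramp, Rmax. destruct Rle_dec; lra. Qed.

Lemma ramp_sq_taylor t h :
  Rabs (ramp (t + h) ^ 2 - ramp t ^ 2 - (- 2 * ramp t) * h) <= h ^ 2.
Proof.
  unfold ramp, Rmax. apply Rabs_le.
  destruct (Rle_dec (1 - (t + h)) 0), (Rle_dec (1 - t) 0).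
  - split; nra.
  - assert (0 <= (h - (1 - t)) * (1 - t)) by (apply Rmult_le_pos; lra). split; nra.
  - assert (0 <= (- h - (1 - (t + h))) * (- h + (1 - (t + h)))) by (apply Rmult_le_pos; lra).
    split; nra.
  - split; nra.
Qed.

Lemma ramp_cube_taylor t h : 0 <= t -> 0 <= t + h ->
  Rabs (ramp (t + h) ^ 3 - ramp t ^ 3 - (- 3 * ramp t ^ 2) * h) <= 3 * h ^ 2.
Proof.
  intros Ht Hth. unfold ramp, Rmax. apply Rabs_le.
  set (a := 1 - t). set (b := 1 - (t + h)). replace h with (a - b) by (unfold a, b; ring).
  assert (a <= 1) by (unfold a; lra). assert (b <= 1) by (unfold b; lra).
  clearbody a b. destruct (Rle_dec b 0), (Rle_dec a 0).
  - pose proof (pow2_ge_0 (a - b)). split; nra.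
  - assert (0 <= a ^ 2 * (- b)) by (apply Rmult_le_pos; [apply pow2_ge_0 | lra]).
    assert (0 <= (a - b) * (a - b - a ^ 2)) by (apply Rmult_le_pos; nra). split; nra.
  - assert (0 <= b ^ 2 * (1 - b)) by (apply Rmult_le_pos; [apply pow2_ge_0 | lra]).
    assert (0 <= (b - a - b) * (b - a + b)) by (apply Rmult_le_pos; lra). split; nra.
  - assert (0 <= (a - b) ^ 2 * (3 - b - 2 * a)) by (apply Rmult_le_pos; [apply pow2_ge_0 | lra]).
    assert (0 <= (a - b) ^ 2 * (b + 2 * a)) by (apply Rmult_le_pos; [apply pow2_ge_0 | lra]).
    split; nra.
Qed.

Definition product_flow (c0 c2 : R -> R) : flow_map :=
  fun t a2 a3 => mk3 (c0 t * a3) a2 (c2 t * a3).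

Lemma Rabs_lipschitz_mul_lt (c : R -> R) L s t a3 b3 delta : 0 <= L ->
  Rabs (c s - c t) <= L * Rabs (s - t) -> Rabs (c t) <= 1 -> Rabs b3 <= 1 ->
  Rabs (s - t) < delta -> Rabs (b3 - a3) < delta -> Rabs (c s * b3 - c t * a3) < (L + 1) * delta.
Proof.
  intros HL Hc Hct Hb Hst Hab.
  replace (c s * b3 - c t * a3) with ((c s - c t) * b3 + c t * (b3 - a3)) by ring.
  eapply Rle_lt_trans; [apply Rabs_triang|]. rewrite !Rabs_mult.
  pose proof (Rabs_pos b3). pose proof (Rabs_pos (c s - c t)).
  pose proof (Rabs_pos (c t)). pose proof (Rabs_pos (b3 - a3)). nra.
Qed.

Lemma product_flow_continuous c0 c2 L : 0 <= L ->
  (forall s t, 0 <= s -> 0 <= t -> Rabs (c0 s - c0 t) <= L * Rabs (s - t)) ->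
  (forall s t, 0 <= s -> 0 <= t -> Rabs (c2 s - c2 t) <= L * Rabs (s - t)) ->
  (forall t, 0 <= t -> Rabs (c0 t) <= 1) -> (forall t, 0 <= t -> Rabs (c2 t) <= 1) ->
  flow_continuous (product_flow c0 c2).
Proof.
  intros HL Hc0 Hc2 Hb0 Hb2 t a2 a3 Ht _ eps Heps.
  exists (eps / (L + 1)). split; [apply Rdiv_lt_0_compat; lra|].
  intros s b2 b3 Hs [_ Hb3] Hst Hab2 Hab3.
  assert (Hb : Rabs b3 <= 1) by (apply Rabs_le; lra).
  assert (Heq : (L + 1) * (eps / (L + 1)) = eps) by (field; lra).
  assert (eps / (L + 1) <= eps).
  { apply Rmult_le_reg_l with (L + 1); [lra|]. rewrite Heq. nra. }
  intros []; unfold product_flow, mk3.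
  - rewrite <- Heq. apply Rabs_lipschitz_mul_lt; auto.
  - lra.
  - rewrite <- Heq. apply Rabs_lipschitz_mul_lt; auto.
Qed.

Lemma product_flow_deriv_a2 c0 c2 (D : R -> Prop) t a2 a3 i :
  has_deriv_within D (fun b => product_flow c0 c2 t b a3 i) a2 (mk3 0 1 0 i).
Proof.
  destruct i; unfold product_flow, mk3;
    [apply has_deriv_within_const | apply has_deriv_within_id | apply has_deriv_within_const].
Qed.

Definition nu (t : R) : R := ramp t ^ 2 - ramp t ^ 3.
Definition phi (t : R) : R := ramp t ^ 2.
Definition dnu (t : R) : R := 3 * ramp t ^ 2 - 2 * ramp t.
Definition dphi (t : R) : R := - 2 * ramp t.

Definition collapse_flow : flow_map := product_flow nu phi.

Lemma Rabs_sq_sub_le a b : 0 <= a <= 1 -> 0 <= b <= 1 -> Rabs (a ^ 2 - b ^ 2) <= 2 * Rabs (a - b).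
Proof.
  intros. replace (a ^ 2 - b ^ 2) with ((a - b) * (a + b)) by ring.
  rewrite Rabs_mult, (Rabs_right (a + b)) by lra.
  pose proof (Rabs_pos (a - b)). nra.
Qed.

Lemma Rabs_cube_sub_le a b : 0 <= a <= 1 -> 0 <= b <= 1 -> Rabs (a ^ 3 - b ^ 3) <= 3 * Rabs (a - b).
Proof.
  intros. replace (a ^ 3 - b ^ 3) with ((a - b) * (a * a + a * b + b * b)) by ring.
  rewrite Rabs_mult, (Rabs_right (a * a + a * b + b * b)) by nra.
  assert (a * a + a * b + b * b <= 3) by nra.
  pose proof (Rabs_pos (a - b)). nra.
Qed.

Lemma collapse_flow_continuous : flow_continuous collapse_flow.
Proof.
  apply (product_flow_continuous _ _ 5); [lra | | | |].
  - intros s t Hs Ht. pose proof (ramp_range s Hs). pose proof (ramp_range t Ht).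
    pose proof (ramp_lipschitz s t). unfold nu.
    replace (ramp s ^ 2 - ramp s ^ 3 - (ramp t ^ 2 - ramp t ^ 3))
      with ((ramp s ^ 2 - ramp t ^ 2) - (ramp s ^ 3 - ramp t ^ 3)) by ring.
    eapply Rle_trans; [apply Rabs_triang|]. rewrite Rabs_Ropp.
    pose proof (Rabs_sq_sub_le (ramp s) (ramp t) ltac:(lra) ltac:(lra)).
    pose proof (Rabs_cube_sub_le (ramp s) (ramp t) ltac:(lra) ltac:(lra)). lra.
  - intros s t Hs Ht. pose proof (ramp_range s Hs). pose proof (ramp_range t Ht).
    pose proof (ramp_lipschitz s t). pose proof (Rabs_pos (ramp s - ramp t)).
    pose proof (Rabs_sq_sub_le (ramp s) (ramp t) ltac:(lra) ltac:(lra)). unfold phi. lra.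
  - intros t Ht. pose proof (ramp_range t Ht). unfold nu. apply Rabs_le. split; nra.
  - intros t Ht. pose proof (ramp_range t Ht). unfold phi. apply Rabs_le. split; nra.
Qed.

Lemma nu_mul_deriv t a3 : 0 <= t ->
  has_deriv_within (fun s => 0 <= s) (fun s => nu s * a3) t (dnu t * a3).
Proof.
  intros Ht. apply has_deriv_within_taylor with (C := Rabs a3 * 4). intros h Hth.
  pose proof (ramp_sq_taylor t h) as Hsq. pose proof (ramp_cube_taylor t h Ht Hth) as Hcube.
  set (r2 := ramp (t + h) ^ 2 - ramp t ^ 2 - (- 2 * ramp t) * h) in Hsq.
  set (r3 := ramp (t + h) ^ 3 - ramp t ^ 3 - (- 3 * ramp t ^ 2) * h) in Hcube.
  replace (nu (t + h) * a3 - nu t * a3 - dnu t * a3 * h) with (a3 * (r2 - r3))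
    by (unfold r2, r3, nu, dnu; ring).
  assert (Hr : Rabs (r2 - r3) <= 4 * h ^ 2).
  { unfold Rminus. eapply Rle_trans; [apply Rabs_triang|]. rewrite Rabs_Ropp. lra. }
  rewrite Rabs_mult, Rmult_assoc. apply Rmult_le_compat_l; [apply Rabs_pos | exact Hr].
Qed.

Lemma phi_mul_deriv t a3 :
  has_deriv_within (fun s => 0 <= s) (fun s => phi s * a3) t (dphi t * a3).
Proof.
  apply has_deriv_within_taylor with (C := Rabs a3). intros h _.
  pose proof (ramp_sq_taylor t h) as Hsq.
  replace (phi (t + h) * a3 - phi t * a3 - dphi t * a3 * h)
    with (a3 * (ramp (t + h) ^ 2 - ramp t ^ 2 - (- 2 * ramp t) * h)) by (unfold phi, dphi; ring).
  rewrite Rabs_mult. apply Rmult_le_compat_l; [apply Rabs_pos | lra].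
Qed.

Lemma mulmv_collapse_kernel_e1 y i : mulmv (collapse_kernel y) (mk3 0 1 0) i = kernel_col y i.
Proof. unfold mulmv, collapse_kernel, mk3. ring. Qed.

Lemma collapse_flow_velocity t a2 a3 : 0 <= t -> inXi a2 a3 ->
  is_integral_Xi_vec
    (fun b2 b3 => mulmv (collapse_kernel (vsub (collapse_flow t a2 a3) (collapse_flow t b2 b3)))
                        (mk3 0 1 0))
    (mk3 (dnu t * a3) 0 (dphi t * a3)).
Proof.
  intros Ht [_ Ha3]. pose proof (ramp_range t Ht) as Hr. set (r := ramp t) in *.
  assert (Hcol : forall b2 b3, inXi b2 b3 ->
            let y := vsub (collapse_flow t a2 a3) (collapse_flow t b2 b3) in
            kernel_col y I0 = (3 * r - 2) / 4 * (r * (a3 - b3)) /\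
            kernel_col y I2 = - (r * (a3 - b3)) / 2).
  { intros b2 b3 [_ Hb3] y.
    apply kernel_col_flow_diff; [exact Hr | lra | |];
      unfold y, collapse_flow, product_flow, vsub, mk3, nu, phi; fold r; ring. }
  intros i. destruct i; unfold mk3 at 2.
  - apply (is_integral_Xi_affine _ ((3 * r - 2) / 4 * r * a3) (- ((3 * r - 2) / 4 * r))).
    + intros b2 b3 Hb. rewrite mulmv_collapse_kernel_e1, (proj1 (Hcol b2 b3 Hb)). ring.
    + unfold dnu. fold r. field.
  - apply (is_integral_Xi_affine _ 0 0); [|ring]. intros b2 b3 _.
    rewrite mulmv_collapse_kernel_e1. unfold kernel_col, mk3. ring.
  - apply (is_integral_Xi_affine _ (- r * a3 / 2) (r / 2)).
    + intros b2 b3 Hb. rewrite mulmv_collapse_kernel_e1, (proj2 (Hcol b2 b3 Hb)). field.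
    + unfold dphi. fold r. field.
Qed.

Lemma collapse_flow_admits : admits_flow collapse_kernel collapse_flow.
Proof.
  split; [exact collapse_flow_continuous|]. split.
  - intros a2 a3 _. unfold collapse_flow, product_flow, nu, phi. rewrite ramp_0.
    f_equal; ring.
  - exists (fun _ _ _ => mk3 0 1 0). split.
    + intros t a2 a3 _ _ i. apply product_flow_deriv_a2.
    + intros t a2 a3 Ht Ha. exists (mk3 (dnu t * a3) 0 (dphi t * a3)). split.
      * exact (collapse_flow_velocity t a2 a3 Ht Ha).
      * intros []; unfold collapse_flow, product_flow, mk3.
        -- exact (nu_mul_deriv t a3 Ht).
        -- apply has_deriv_within_const.
        -- exact (phi_mul_deriv t a3).
Qed.

Theorem theorem4p2 :
  exists (K : vec3 -> mat3) (X : flow_map),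
    kernel_continuous K /\ admits_flow K X /\
    exists T : R, T > 0 /\
      forall t, t > T -> forall a2 a3, inXi a2 a3 ->
        X t a2 a3 I0 = 0 /\ -1 <= X t a2 a3 I1 <= 1 /\ X t a2 a3 I2 = 0.
Proof.
  exists collapse_kernel, collapse_flow.
  split; [exact collapse_kernel_continuous|]. split; [exact collapse_flow_admits|].
  exists 1. split; [lra|]. intros t Ht a2 a3 [Ha2 _].
  unfold collapse_flow, product_flow, nu, phi, mk3. rewrite (ramp_eq0 t) by lra.
  repeat split; lra || ring.
Qed.
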